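(* Let $p,q\in[1,\infty)$. Without assuming the Objectivity Assumption, the $L(p,q)$-aggregation method satisfies Consensus with score vectors: for every data set and every paper $a$, if all reviewers give $a$ the same recommendation $y$ ($y_{ia}=y$ for all $i$) and the same score vector ($\bar x_{ia}=\bar x_a$ for all $i$), then $s_a=y$.
   Context: Peer-review setting: a finite set $\mathcal{R}$ of reviewers, a finite set $\mathcal{P}$ of papers, and $d\ge1$ criteria. Every reviewer $i$ reviews every paper $a$, giving a score vector $\bar{x}_{ia}\in[0,10]^d$ and a recommendation $y_{ia}\in[0,10]$. A function $h:[0,10]^d\to[0,10]$ is monotonic if $\bar x\le\bar y$ componentwise implies $h(\bar x)\le h(\bar y)$. Standing assumption: each reviewer $i$ has a monotonic $h_i$ with $y_{ia}=h_i(\bar x_{ia})$ for all $a$. Score vectors of different reviewers for the same paper may differ (no Objectivity Assumption). The $L(p,q)$-aggregation method: (1) ERM step: find a monotonic $\hat h$ minimizing $\big[\sum_{i\in\mathcal{R}}\big(\sum_{a\in\mathcal{P}}|y_{ia}-h(\bar x_{ia})|^p\big)^{q/p}\big]^{1/q}$ over monotonic $h$ (only the values $h(\bar x_{ia})$ matter); among minimizers the value vector $(\hat h(\bar x_{ia}))_{i,a}$ of smallest Euclidean norm is chosen; set $\hat y_{ia}=\hat h(\bar x_{ia})$. (2) Aggregation step: the solution $(s_a)_{a\in\mathcal P}$ minimizes $\big[\sum_{i}\big(\sum_{a}|\hat y_{ia}-s_a|^p\big)^{q/p}\big]^{1/q}$ (ties broken by smallest Euclidean norm). *)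

From HB Require Import structures.
From mathcomp Require Import all_boot all_order all_algebra.
From mathcomp Require Import all_classical all_reals all_analysis.
Set Implicit Arguments. Unset Strict Implicit. Unset Printing Implicit Defensive.
Import Order.TTheory GRing.Theory Num.Theory.
Local Open Scope ring_scope.

Section PeerReview.
Variables (R : realType) (d : nat).

Definition in_cube (x : 'I_d -> R) : Prop := forall k, 0 <= x k <= 10.

Definition monotonic_score (h : ('I_d -> R) -> R) : Prop :=
  (forall x, in_cube x -> 0 <= h x <= 10) /\
  (forall x y, in_cube x -> in_cube y -> (forall k, x k <= y k) -> h x <= h y).

Variables (Rv Pp : finType).

Definition Lpq_loss (p q : R) (y v : Rv -> Pp -> R) : R :=
  (\sum_(i : Rv) (\sum_(a : Pp) `|y i a - v i a| `^ p) `^ (q / p)) `^ q^-1.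

Definition eucl_norm2 (v : Rv -> Pp -> R) : R :=
  Num.sqrt (\sum_(i : Rv) \sum_(a : Pp) v i a ^+ 2).

Definition eucl_norm1 (s : Pp -> R) : R :=
  Num.sqrt (\sum_(a : Pp) s a ^+ 2).

Definition realizable (x : Rv -> Pp -> 'I_d -> R) (v : Rv -> Pp -> R) : Prop :=
  exists h, monotonic_score h /\ forall i a, v i a = h (x i a).

Definition is_ERM_output (p q : R) (x : Rv -> Pp -> 'I_d -> R)
  (y : Rv -> Pp -> R) (yhat : Rv -> Pp -> R) : Prop :=
  [/\ realizable x yhat,
      (forall v, realizable x v -> Lpq_loss p q y yhat <= Lpq_loss p q y v) &
      (forall v, realizable x v -> Lpq_loss p q y v = Lpq_loss p q y yhat ->
         eucl_norm2 yhat <= eucl_norm2 v)].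

Definition is_agg_output (p q : R) (yhat : Rv -> Pp -> R) (s : Pp -> R) : Prop :=
  (forall t : Pp -> R, Lpq_loss p q yhat (fun _ => s) <= Lpq_loss p q yhat (fun _ => t)) /\
  (forall t : Pp -> R, Lpq_loss p q yhat (fun _ => t) = Lpq_loss p q yhat (fun _ => s) ->
     eucl_norm1 s <= eucl_norm1 t).

Definition valid_data (x : Rv -> Pp -> 'I_d -> R) (y : Rv -> Pp -> R) : Prop :=
  [/\ (forall i a, in_cube (x i a)), (forall i a, 0 <= y i a <= 10) &
      (forall i, exists h, monotonic_score h /\ forall a, y i a = h (x i a))].

End PeerReview.

From HB Require Import structures.
From mathcomp Require Import all_boot all_order all_algebra.
From mathcomp Require Import all_classical all_reals all_analysis.
From mathcomp Require Import lra.
Set Implicit Arguments. Unset Strict Implicit. Unset Printing Implicit Defensive.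
Import Order.TTheory GRing.Theory Num.Theory.
Local Open Scope ring_scope.

(** Consensus at the aggregation step is immediate: if every fitted value of
    paper [a] equals [c], moving [s a] to [c] lowers every error term.  The
    content lies in the ERM step.  Let [h] be the fitted function and suppose
    [h xa <> ya].  Every reviewer function [h_i] is monotonic with
    [h_i xa = ya], so it lies between the smallest and the largest monotonic
    scores through [(xa, ya)]; clamping [h] between these two envelopes yields
    a monotonic score that is nowhere farther from the data than [h], and
    strictly closer at paper [a].  This contradicts the minimality of [h]. *)

Section LossMonotonicity.
Variable R : realType.

Lemma ltr_sum_bigD1 (I : finType) (F G : I -> R) (i0 : I) :
  (forall i, F i <= G i) -> F i0 < G i0 -> \sum_i F i < \sum_i G i.
Proof.
by move=> leFG ltFG; rewrite (bigD1 i0) // [ltRHS](bigD1 i0) //= ltr_leD // ler_sum.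
Qed.

Lemma ler_powR2 (e u v : R) : 0 <= e -> 0 <= u -> u <= v -> u `^ e <= v `^ e.
Proof.
move=> e_ge0 u_ge0 le_uv; have v_ge0 := le_trans u_ge0 le_uv.
by apply: ge0_ler_powR; rewrite ?nnegrE.
Qed.

Lemma ltr_powR2 (e u v : R) : 0 < e -> 0 <= u -> u < v -> u `^ e < v `^ e.
Proof.
move=> e_gt0 u_ge0 lt_uv; have v_ge0 := le_trans u_ge0 (ltW lt_uv).
by apply: gt0_ltr_powR; rewrite ?nnegrE.
Qed.

Lemma ltr_sum_powR (I : finType) (e : R) (F G : I -> R) (i0 : I) :
  0 < e -> (forall i, 0 <= F i) -> (forall i, F i <= G i) -> F i0 < G i0 ->
  \sum_i F i `^ e < \sum_i G i `^ e.
Proof.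
move=> e_gt0 F_ge0 leFG ltFG; apply: (ltr_sum_bigD1 (i0 := i0)) => [i|].
  exact: ler_powR2 (ltW e_gt0) (F_ge0 i) (leFG i).
exact: ltr_powR2.
Qed.

Variables (Rv Pp : finType) (p q : R).
Hypotheses (p_gt0 : 0 < p) (q_gt0 : 0 < q).

Lemma Lpq_loss_lt (y v w : Rv -> Pp -> R) (i0 : Rv) (a0 : Pp) :
  (forall i b, `|y i b - v i b| <= `|y i b - w i b|) ->
  `|y i0 a0 - v i0 a0| < `|y i0 a0 - w i0 a0| ->
  Lpq_loss p q y v < Lpq_loss p q y w.
Proof.
move=> le_err lt_err; rewrite /Lpq_loss.
pose err (u : Rv -> Pp -> R) i := \sum_b `|y i b - u i b| `^ p.
have err_ge0 u i : 0 <= err u i by apply: sumr_ge0 => b _; apply: powR_ge0.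
have err_le i : err v i <= err w i.
  by apply: ler_sum => b _; apply: ler_powR2 (ltW p_gt0) (normr_ge0 _) (le_err i b).
have err_lt : err v i0 < err w i0.
  exact: ltr_sum_powR p_gt0 (fun b => normr_ge0 _) (le_err i0) lt_err.
apply: ltr_powR2; [by rewrite invr_gt0 | by apply: sumr_ge0 => i _; apply: powR_ge0 |].
by apply: ltr_sum_powR (err_ge0 v) err_le err_lt; rewrite divr_gt0.
Qed.

End LossMonotonicity.

Section Envelopes.
Variables (R : realType) (d : nat).
Implicit Types (h : ('I_d -> R) -> R) (xa z : 'I_d -> R) (c : R).

Definition score_floor xa c z : R := if `[< forall k, xa k <= z k >] then c else 0.

Definition score_ceil xa c z : R := if `[< forall k, z k <= xa k >] then c else 10.

Definition pin_score xa c h z : R :=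
  Num.max (Num.min (h z) (score_ceil xa c z)) (score_floor xa c z).

Lemma score_floor_le h xa z : monotonic_score h -> in_cube xa -> in_cube z ->
  score_floor xa (h xa) z <= h z.
Proof.
move=> [h_range h_homo] xa_cube z_cube; rewrite /score_floor.
case: asboolP => [xa_le_z|_]; first exact: h_homo.
by have /andP[] := h_range z z_cube.
Qed.

Lemma le_score_ceil h xa z : monotonic_score h -> in_cube xa -> in_cube z ->
  h z <= score_ceil xa (h xa) z.
Proof.
move=> [h_range h_homo] xa_cube z_cube; rewrite /score_ceil.
case: asboolP => [z_le_xa|_]; first exact: h_homo.
by have /andP[] := h_range z z_cube.
Qed.

Lemma pin_score_pinned h xa c : pin_score xa c h xa = c.
Proof.
rewrite /pin_score /score_ceil /score_floor asboolT // max_r //.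
by rewrite ge_min lexx orbT.
Qed.

Lemma monotonic_pin_score h xa c : 0 <= c <= 10 ->
  monotonic_score h -> monotonic_score (pin_score xa c h).
Proof.
move=> /andP[c_ge0 c_le10] [h_range h_homo].
have floor_range z : 0 <= score_floor xa c z <= c.
  by rewrite /score_floor; case: ifP; rewrite ?lexx ?c_ge0.
have ceil_range z : c <= score_ceil xa c z <= 10.
  by rewrite /score_ceil; case: ifP; rewrite ?lexx ?c_le10.
split=> [z z_cube|z1 z2 z1_cube z2_cube le_z12].
  have /andP[_ hz_le10] := h_range z z_cube.
  have /andP[fl_ge0 fl_lec] := floor_range z.
  by rewrite le_max fl_ge0 orbT ge_max ge_min hz_le10 (le_trans fl_lec c_le10).
have floor_homo : score_floor xa c z1 <= score_floor xa c z2.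
  rewrite /score_floor; case: (asboolP (forall k, xa k <= z1 k)) => [xa_le_z1|].
    by rewrite asboolT // => k; apply: le_trans (xa_le_z1 k) (le_z12 k).
  by have /andP[] := floor_range z2.
have ceil_homo : score_ceil xa c z1 <= score_ceil xa c z2.
  rewrite /score_ceil; case: (asboolP (forall k, z2 k <= xa k)) => [z2_le_xa|].
    by rewrite asboolT // => k; apply: le_trans (le_z12 k) (z2_le_xa k).
  by case: ifP => _; [|have /andP[] := ceil_range z1].
have hz12 := h_homo z1 z2 z1_cube z2_cube le_z12.
rewrite /pin_score ge_max !le_max !le_min !ge_min.
by rewrite hz12 ceil_homo floor_homo /= !orbT.
Qed.

Lemma dist_clamp_le (lo hi t u : R) : lo <= t -> t <= hi ->
  `|t - Num.max (Num.min u hi) lo| <= `|t - u|.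
Proof.
move=> lo_le_t t_le_hi; set m := Num.max _ _.
have [u_le_t|t_lt_u] := leP u t.
  have u_le_m : u <= m by rewrite /m le_max le_min lexx (le_trans u_le_t t_le_hi).
  have m_le_t : m <= t by rewrite /m ge_max ge_min u_le_t lo_le_t.
  rewrite !ger0_norm ?subr_ge0 //; lra.
have m_le_u : m <= u by rewrite /m ge_max ge_min lexx (le_trans lo_le_t (ltW t_lt_u)).
have t_le_m : t <= m by rewrite /m le_max le_min t_le_hi (ltW t_lt_u).
rewrite !ler0_norm ?subr_le0 ?(ltW t_lt_u) //; lra.
Qed.

Lemma dist_pin_score_le g h xa z : monotonic_score g -> in_cube xa -> in_cube z ->
  `|g z - pin_score xa (g xa) h z| <= `|g z - h z|.
Proof.
move=> g_mono xa_cube z_cube.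
by apply: dist_clamp_le; [apply: score_floor_le | apply: le_score_ceil].
Qed.

End Envelopes.

Section Consensus.
Variables (R : realType) (d : nat) (Rv Pp : finType) (p q : R).
Hypotheses (p_gt0 : 0 < p) (q_gt0 : 0 < q).
Variables (r0 : Rv) (a : Pp).

Lemma ERM_output_consensus (x : Rv -> Pp -> 'I_d -> R) (y yhat : Rv -> Pp -> R)
    (ya : R) (xa : 'I_d -> R) :
  valid_data x y -> is_ERM_output p q x y yhat ->
  (forall i, y i a = ya) -> (forall i, x i a = xa) ->
  forall i, yhat i a = ya.
Proof.
move=> [x_cube y_range y_mono] [[h [h_mono yhatE]] yhat_min _] ya_cons xa_cons i.
have xa_cube : in_cube xa by rewrite -(xa_cons r0); exact: x_cube.
have ya_range : 0 <= ya <= 10 by rewrite -(ya_cons r0); exact: y_range.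
rewrite yhatE xa_cons; apply/eqP/negPn/negP => h_xa_neq.
pose h' := pin_score xa ya h.
have h'_real : realizable x (fun i b => h' (x i b)).
  by exists h'; split=> //; apply: monotonic_pin_score.
suff : Lpq_loss p q y (fun i b => h' (x i b)) < Lpq_loss p q y yhat.
  by apply/negP; rewrite -leNgt yhat_min.
apply: (Lpq_loss_lt p_gt0 q_gt0 (i0 := r0) (a0 := a)) => [j b|].
  have [hj [hj_mono yjE]] := y_mono j.
  have hj_xa : hj xa = ya by rewrite -(xa_cons j) -yjE ya_cons.
  rewrite yhatE yjE /h' -hj_xa.
  exact: dist_pin_score_le hj_mono xa_cube (x_cube j b).
rewrite ya_cons yhatE xa_cons /h' pin_score_pinned subrr normr0.
by rewrite normr_gt0 subr_eq0 eq_sym.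
Qed.

Lemma agg_output_consensus (yhat : Rv -> Pp -> R) (s : Pp -> R) (c : R) :
  is_agg_output p q yhat s -> (forall i, yhat i a = c) -> s a = c.
Proof.
move=> [s_min _] yhat_cons; apply/eqP/negPn/negP => sa_neq.
pose t b := if b == a then c else s b.
suff : Lpq_loss p q yhat (fun=> t) < Lpq_loss p q yhat (fun=> s).
  by apply/negP; rewrite -leNgt s_min.
apply: (Lpq_loss_lt p_gt0 q_gt0 (i0 := r0) (a0 := a)) => [i b|].
  by rewrite /t; case: eqP => [->|_]; rewrite ?yhat_cons ?subrr ?normr0.
by rewrite /t eqxx yhat_cons subrr normr0 normr_gt0 subr_eq0 eq_sym.
Qed.

End Consensus.

Theorem proposition4p2 (R : realType) (d : nat) (Rv Pp : finType)
  (p q : R) (hp : 1 <= p) (hq : 1 <= q) (hd : (1 <= d)%N) (r0 : Rv)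
  (x : Rv -> Pp -> 'I_d -> R) (y : Rv -> Pp -> R)
  (hdata : valid_data x y)
  (yhat : Rv -> Pp -> R) (hyhat : is_ERM_output p q x y yhat)
  (s : Pp -> R) (hs : is_agg_output p q yhat s)
  (a : Pp) (ya : R) (xa : 'I_d -> R)
  (hy : forall i, y i a = ya) (hx : forall i, x i a = xa) :
  s a = ya.
Proof.
have p_gt0 : 0 < p by apply: lt_le_trans hp.
have q_gt0 : 0 < q by apply: lt_le_trans hq.
apply: (agg_output_consensus p_gt0 q_gt0 r0 hs).
exact: (ERM_output_consensus p_gt0 q_gt0 r0 hdata hyhat hy hx).
Qed.
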